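(* Let $(\mathcal{A},m)$ be a multiarrangement and fix a hyperplane $H_0\in \mathcal{A}$ with $H_0=\ker \alpha_{H_0}$. If $\delta\in D_0^p(\mathcal{A},m)$, then $\delta|_{H_0} \in D^p(\mathcal{A}^{H_0},m^{H_0})$. In particular, this gives well-defined restriction maps $\mathrm{res}_{H_0}^p : D_0^p (\mathcal{A},m) \rightarrow D^p (\mathcal{A}^{H_0},m^{H_0})$, $\delta\mapsto\delta|_{H_0}$.
   Context: Let $V=\mathbb{K}^\ell$, $S=\mathbb{K}[x_1,\ldots,x_\ell]$, and let $(\mathcal{A},m)$ be a multiarrangement (a finite set of linear hyperplanes $\mathcal{A}$ in $V$ with multiplicity $m:\mathcal{A}\to\mathbb{Z}_{>0}$), each $H\in\mathcal{A}$ having defining linear form $\alpha_H$. For $p\ge1$, $\mathrm{Der}^p(S)$ is the $S$-module of alternating $p$-linear forms $S^p\to S$ that are $\mathbb{K}$-derivations in each variable, and $D^p(\mathcal{A},m)=\{\theta\in \mathrm{Der}^p(S)\mid \theta(\alpha_H,f_2,\ldots,f_p)\in\alpha_H^{m(H)}S \text{ for all } H\in\mathcal{A},\ f_i\in S\}$. For fixed $H_0\in\mathcal{A}$, $D_0^p(\mathcal{A},m):=\{\delta\in D^p(\mathcal{A},m)\mid \delta(\alpha_{H_0},f_2,\ldots,f_p)=0 \text{ for all } f_i\in S\}$. The multi-Ziegler restriction $(\mathcal{A}^{H_0},m^{H_0})$ is the multiarrangement in $H_0$ given by $\mathcal{A}^{H_0}=\{H_0\cap H\mid H\in\mathcal{A}\setminus\{H_0\}\}$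 and $m^{H_0}(X)=\sum_{H\in\mathcal{A}_X\setminus\{H_0\}} m(H)$, where $\mathcal{A}_X=\{H\in\mathcal{A}\mid X\subseteq H\}$; its derivation modules $D^p(\mathcal{A}^{H_0},m^{H_0})$ are defined analogously over $\overline{S}=S/\alpha_{H_0}S$. Here $\delta|_{H_0}$ denotes the derivation over $\overline{S}$ obtained by reducing the values of $\delta$ modulo $\alpha_{H_0}$. *)

From HB Require Import structures.
From mathcomp Require Import all_boot all_algebra.
From mathcomp Require Import mpoly.

Set Implicit Arguments.
Unset Strict Implicit.
Unset Printing Implicit Defensive.

Import GRing.Theory.
Local Open Scope ring_scope.

Definition upd (R : Type) (p : nat) (f : 'I_p -> R) (i : 'I_p) (x : R) : 'I_p -> R :=
  fun j => if j == i then x else f j.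

(* p-derivations over a commutative K-algebra R (structure map iota : K -> R),
   where R is presented as a setoid: eqv is the equality of R.  For R = S we
   take eqv = eq; for the quotient S/(alpha)S we take eqv = congruence modulo
   alpha, so that a map on the quotient is a map on S compatible with eqv. *)
Definition is_pder_up_to (K : Type) (R : comNzRingType) (iota : K -> R)
    (eqv : R -> R -> Prop) (p : nat) (th : ('I_p -> R) -> R) : Prop :=
  [/\ (forall f g, (forall i, eqv (f i) (g i)) -> eqv (th f) (th g)),
      (forall f i x y, eqv (th (upd f i (x + y))) (th (upd f i x) + th (upd f i y))),
      (forall f i c x, eqv (th (upd f i (iota c * x))) (iota c * th (upd f i x))),
      (forall f i x y,
          eqv (th (upd f i (x * y))) (x * th (upd f i y) + y * th (upd f i x))) &
      (forall f (i j : 'I_p), i != j -> eqv (f i) (f j) -> eqv (th f) 0)].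

Definition dvd_up_to (R : comNzRingType) (eqv : R -> R -> Prop) (a b : R) : Prop :=
  exists g : R, eqv b (a * g).

(* D^p of a multiarrangement over R: hyperplanes indexed by the H in J with
   P H, defining forms alpha H, multiplicities mult H.  The condition
   th(alpha_H, f_2, ..., f_p) in alpha_H^{m(H)} R is imposed on the first
   argument (the argument of index 0). *)
Definition Dp_up_to (K : Type) (R : comNzRingType) (iota : K -> R)
    (eqv : R -> R -> Prop) (J : finType) (P : pred J) (alpha : J -> R)
    (mult : J -> nat) (p : nat) (th : ('I_p -> R) -> R) : Prop :=
  is_pder_up_to iota eqv th /\
  forall H, P H -> forall (i : 'I_p) (f : 'I_p -> R),
    val i = 0%N -> eqv (f i) (alpha H) -> dvd_up_to eqv (alpha H ^+ mult H) (th f).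

(* The linear form x |-> sum_i a_i x_i in S = K[x_1,...,x_l] given by the
   coefficient column a; its kernel (the hyperplane) is the row space of
   kermx a = { u : 'rV_l | u *m a = 0 }. *)
Definition lform (K : fieldType) (l : nat) (a : 'cV[K]_l) : {mpoly K[l]} :=
  \sum_(i < l) a i 0 *: 'X_i.

(* Congruence modulo alpha0 in S: equality in S/alpha0 S. *)
Definition modrel (K : fieldType) (l : nat) (a0 f g : {mpoly K[l]}) : Prop :=
  exists h : {mpoly K[l]}, f - g = a0 * h.

Definition cst (K : fieldType) (l : nat) (c : K) : {mpoly K[l]} := c%:MP.

(* Multiarrangement (A,m) in K^l: hyperplanes indexed by a finite type I,
   H = ker alpha_H with alpha_H = lform (a H) nonzero, pairwise distinct,
   with positive multiplicities. *)
Definition is_multiarr (K : fieldType) (l : nat) (I : finType)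
    (a : I -> 'cV[K]_l) (m : I -> nat) : Prop :=
  [/\ forall H, a H != 0,
      forall H H', H != H' -> ~~ (kermx (a H) == kermx (a H'))%MS &
      forall H, (0 < m H)%N].

Definition Dp (K : fieldType) (l : nat) (I : finType) (a : I -> 'cV[K]_l)
    (m : I -> nat) (p : nat) (th : ('I_p -> {mpoly K[l]}) -> {mpoly K[l]}) : Prop :=
  Dp_up_to (@cst K l) eq predT (fun H => lform (a H)) m th.

Definition Dp0 (K : fieldType) (l : nat) (I : finType) (a : I -> 'cV[K]_l)
    (m : I -> nat) (H0 : I) (p : nat)
    (th : ('I_p -> {mpoly K[l]}) -> {mpoly K[l]}) : Prop :=
  Dp a m th /\
  forall (i : 'I_p) (f : 'I_p -> {mpoly K[l]}),
    val i = 0%N -> f i = lform (a H0) -> th f = 0.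

(* Ziegler multiplicity m^{H0}(X) of X = H0 cap H:
   sum of m(H') over H' <> H0 with X contained in H'. *)
Definition zmult (K : fieldType) (l : nat) (I : finType) (a : I -> 'cV[K]_l)
    (m : I -> nat) (H0 H : I) : nat :=
  (\sum_(H' | (H' != H0) &&
       ((kermx (a H0) :&: kermx (a H)) <= kermx (a H'))%MS) m H')%N.

(* delta|_{H0} in D^p(A^{H0}, m^{H0}) over Sbar = S/alpha_{H0} S:
   the elements X of A^{H0} are the H0 cap H (H <> H0), with defining form
   the image of alpha_H in Sbar, and multiplicity m^{H0}(H0 cap H). *)
Definition restr_in_Dp (K : fieldType) (l : nat) (I : finType)
    (a : I -> 'cV[K]_l) (m : I -> nat) (H0 : I) (p : nat)
    (th : ('I_p -> {mpoly K[l]}) -> {mpoly K[l]}) : Prop :=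
  Dp_up_to (@cst K l) (modrel (lform (a H0))) [pred H | H != H0]
    (fun H => lform (a H)) (zmult a m H0) th.

(* Since delta(alpha_H0, ...) = 0 and delta is alternating, delta vanishes as soon as
   any argument equals alpha_H0; the Leibniz rule then gives
   delta(.., alpha_H0 h, ..) = alpha_H0 delta(.., h, ..), so delta respects congruence
   modulo alpha_H0 and descends to a p-derivation over S/alpha_H0 S.
   For the divisibility condition at X = H0 cap H, every H' <> H0 containing X has
   alpha_H' = c alpha_H + d alpha_H0 with c <> 0, hence
   delta(alpha_H, ..) = c^-1 delta(alpha_H', ..) is divisible by alpha_H'^m(H').
   These forms are pairwise non-proportional, hence pairwise coprime, so their product
   divides delta(alpha_H, ..), and modulo alpha_H0 that product is a constant times
   alpha_H^(m^H0(X)). *)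

From HB Require Import structures.
From mathcomp Require Import all_boot all_algebra.
From mathcomp Require Import mpoly.
From mathcomp Require Import zify.

Set Implicit Arguments.
Unset Strict Implicit.
Unset Printing Implicit Defensive.

Import GRing.Theory.
Local Open Scope ring_scope.

Definition eqmod (R : comNzRingType) (a x y : R) : Prop := exists h, x - y = a * h.

Section EqMod.
Variables (R : comNzRingType) (a : R).

Lemma eqmod_refl x : eqmod a x x.
Proof. by exists 0; rewrite subrr mulr0. Qed.

Lemma eqmod_sym x y : eqmod a x y -> eqmod a y x.
Proof. by case=> h e; exists (- h); rewrite mulrN -e opprB. Qed.

Lemma eqmod_trans x y z : eqmod a x y -> eqmod a y z -> eqmod a x z.
Proof. by case=> h e [k f]; exists (h + k); rewrite mulrDr -e -f addrA subrK. Qed.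

Lemma eqmodD x y x' y' : eqmod a x y -> eqmod a x' y' -> eqmod a (x + x') (y + y').
Proof. by case=> h e [k f]; exists (h + k); rewrite mulrDr -e -f opprD addrACA. Qed.

Lemma eqmodM x y x' y' : eqmod a x y -> eqmod a x' y' -> eqmod a (x * x') (y * y').
Proof.
case=> h e [k f]; exists (x * k + h * y').
have -> : x * x' - y * y' = x * (x' - y') + (x - y) * y'.
  by rewrite mulrBr mulrBl addrA subrK.
by rewrite e f mulrDr !mulrA [x * a]mulrC.
Qed.

Lemma eqmodX x y n : eqmod a x y -> eqmod a (x ^+ n) (y ^+ n).
Proof.
move=> xy; elim: n => [|n IH]; first exact: eqmod_refl.
by rewrite !exprS; apply: eqmodM.
Qed.

Lemma eqmod_prod (J : Type) (r : seq J) (P : pred J) (x : J -> R) (m : J -> nat) y :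
  (forall i, P i -> exists c, eqmod a (x i) (c * y)) ->
  exists c, eqmod a (\prod_(i <- r | P i) x i ^+ m i) (c * y ^+ (\sum_(i <- r | P i) m i)).
Proof.
move=> xy; elim: r => [|i r [c IH]].
  by exists 1; rewrite !big_nil mul1r; apply: eqmod_refl.
rewrite !big_cons; case: ifP => [Pi|_]; last by exists c.
have [ci xiy] := xy i Pi; exists (ci ^+ m i * c).
by rewrite exprD mulrACA -exprMn; apply: eqmodM (eqmodX _ xiy) IH.
Qed.

End EqMod.

Section Update.
Variables (T : Type) (p : nat).
Implicit Types (f : 'I_p -> T) (i j k : 'I_p).

Lemma upd_eq f i x : upd f i x i = x.
Proof. by rewrite /upd eqxx. Qed.

Lemma upd_neq f i x j : j != i -> upd f i x j = f j.
Proof. by rewrite /upd => /negbTE ->. Qed.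

Lemma upd_self f i : upd f i (f i) =1 f.
Proof. by move=> j; rewrite /upd; case: eqP => // ->. Qed.

Lemma upd_swap f i j x y : i != j -> upd (upd f i x) j y =1 upd (upd f j y) i x.
Proof.
move=> ij k; rewrite /upd; case: (k =P j) => [->|//].
by rewrite eq_sym (negbTE ij).
Qed.

End Update.

Section PDerivation.
Variables (K : Type) (R : comNzRingType) (iota : K -> R) (p : nat).
Variable th : ('I_p -> R) -> R.
Hypothesis th_pder : is_pder_up_to iota eq th.

Lemma pder_ext f g : f =1 g -> th f = th g.
Proof. by case: th_pder => + _ _ _ _; apply. Qed.

Lemma pderD f i x y : th (upd f i (x + y)) = th (upd f i x) + th (upd f i y).
Proof. by case: th_pder. Qed.

Lemma pderZ f i c x : th (upd f i (iota c * x)) = iota c * th (upd f i x).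
Proof. by case: th_pder => _ _ + _ _; apply. Qed.

Lemma pderM f i x y : th (upd f i (x * y)) = x * th (upd f i y) + y * th (upd f i x).
Proof. by case: th_pder => _ _ _ + _; apply. Qed.

Lemma pder_alt f (i j : 'I_p) : i != j -> f i = f j -> th f = 0.
Proof. by case: th_pder => _ _ _ _; apply. Qed.

Lemma pder0 f i : th (upd f i 0) = 0.
Proof.
have := pderD f i 0 0; rewrite addr0 => e.
by apply: (addrI (th (upd f i 0))); rewrite addr0 -e.
Qed.

Lemma pderN f i x : th (upd f i (- x)) = - th (upd f i x).
Proof. by apply/eqP; rewrite -addr_eq0 addrC -pderD subrr pder0. Qed.

Lemma pderB f i x y : th (upd f i (x - y)) = th (upd f i x) - th (upd f i y).
Proof. by rewrite pderD pderN. Qed.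

Lemma pder_swap f i j x y : i != j ->
  th (upd (upd f i x) j y) = - th (upd (upd f i y) j x).
Proof.
move=> ij; pose g u v := th (upd (upd f i u) j v).
have gDr u v w : g u (v + w) = g u v + g u w by rewrite /g pderD.
have gDl u v w : g (u + v) w = g u w + g v w.
  by rewrite /g !(pder_ext (upd_swap _ _ _ ij)) pderD.
have guu u : g u u = 0.
  by apply: (pder_alt ij); rewrite upd_eq upd_neq ?upd_eq // eq_sym.
apply/eqP; rewrite -addr_eq0 -/(g x y) -/(g y x).
by rewrite -(guu (x + y)) gDl !gDr !guu add0r addr0.
Qed.

Section Vanishing.
Variable a0 : R.
Hypothesis p_gt0 : (0 < p)%N.
Hypothesis th_vanish0 : forall (i : 'I_p) f, val i = 0%N -> f i = a0 -> th f = 0.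

Lemma pder_vanish f k : f k = a0 -> th f = 0.
Proof.
move=> fk; pose i0 : 'I_p := Ordinal p_gt0.
have [ki0 | ki0] := eqVneq k i0; first by apply: (th_vanish0 (i := k)); rewrite // ki0.
rewrite (@pder_ext f (upd (upd f i0 (f i0)) k a0)); last first.
  by move=> j; rewrite /upd; case: eqP => [->|] //; case: eqP => // ->.
rewrite pder_swap 1?eq_sym // (th_vanish0 (i := i0)) ?oppr0 //.
by rewrite upd_neq ?upd_eq // eq_sym.
Qed.

Lemma pder_mul_vanish f k h : th (upd f k (a0 * h)) = a0 * th (upd f k h).
Proof. by rewrite pderM (@pder_vanish (upd f k a0) k) ?upd_eq // mulr0 addr0. Qed.

Lemma pder_eqmod1 f k x y : eqmod a0 x y -> eqmod a0 (th (upd f k x)) (th (upd f k y)).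
Proof. by case=> h e; exists (th (upd f k h)); rewrite -pderB e pder_mul_vanish. Qed.

Lemma pder_eqmod f g : (forall i, eqmod a0 (f i) (g i)) -> eqmod a0 (th f) (th g).
Proof.
move=> fg; pose mix (s : seq 'I_p) i := if i \in s then g i else f i.
have mixP s : eqmod a0 (th f) (th (mix s)).
  elim: s => [|k s IH]; first by rewrite (@pder_ext f (mix [::])) //; apply: eqmod_refl.
  apply: eqmod_trans IH _.
  rewrite -(pder_ext (upd_self (mix s) k)).
  rewrite (@pder_ext (mix (k :: s)) (upd (mix s) k (g k))); last first.
    by move=> i; rewrite /mix /upd inE; case: eqP => [->|].
  by apply: pder_eqmod1; rewrite /mix; case: ifP => _; [apply: eqmod_refl | apply: fg].
by rewrite (@pder_ext g (mix (enum 'I_p))) // => i; rewrite /mix mem_enum.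
Qed.

Lemma is_pder_eqmod : is_pder_up_to iota (eqmod a0) th.
Proof.
split=> [||||f i j ij fij].
- exact: pder_eqmod.
- by move=> *; rewrite pderD; apply: eqmod_refl.
- by move=> *; rewrite pderZ; apply: eqmod_refl.
- by move=> *; rewrite pderM; apply: eqmod_refl.
apply: eqmod_trans (pder_eqmod (g := upd f j (f i)) _) _.
  by move=> k; rewrite /upd; case: eqP => [->|_]; [apply: eqmod_sym | apply: eqmod_refl].
by rewrite (pder_alt ij) ?upd_eq ?upd_neq //; apply: eqmod_refl.
Qed.

End Vanishing.
End PDerivation.

Section LinearForm.
Variables (K : fieldType) (l : nat).
Implicit Types (a b : 'cV[K]_l).

Lemma lformD a b : lform (a + b) = lform a + lform b.
Proof. by rewrite /lform -big_split; apply: eq_bigr => i _; rewrite mxE scalerDl. Qed.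

Lemma lformZ c a : lform (c *: a) = c *: lform a.
Proof. by rewrite /lform scaler_sumr; apply: eq_bigr => i _; rewrite mxE scalerA. Qed.

Lemma lform_coef a i : (lform a)@_(U_(i)%MM) = a i 0.
Proof.
rewrite /lform raddf_sum (bigD1 i) //= big1 ?addr0 => [|j ji].
  by rewrite mcoeffZ mcoeffXU eqxx mulr1.
by rewrite mcoeffZ mcoeffXU (negbTE ji) mulr0.
Qed.

Lemma lform_eq0 a : lform a = 0 -> a = 0.
Proof.
by move=> a0; apply/matrixP => i j; rewrite (ord1 j) -lform_coef a0 mcoeff0 mxE.
Qed.

End LinearForm.

Lemma kermx_scale (K : fieldType) m n (A : 'M[K]_(m, n)) d :
  d != 0 -> (kermx (d *: A) == kermx A)%MS.
Proof.
move=> d_neq0; apply/andP; split; apply/sub_kermxP; last first.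
  by rewrite -scalemxAr mulmx_ker scaler0.
have /eqP := mulmx_ker (d *: A).
by rewrite -scalemxAr scaler_eq0 (negbTE d_neq0) => /eqP.
Qed.

Lemma sub_kermx_trmx (K : fieldType) m n (A : 'M[K]_(m, n)) (b : 'cV[K]_m) :
  (kermx A <= kermx b)%MS -> (b^T <= A^T)%MS.
Proof.
move=> sAb; pose N := row_mx A b.
have kerN : (kermx N == kermx A)%MS.
  have [kNA kNb] : kermx N *m A = 0 /\ kermx N *m b = 0.
    by apply: eq_row_mx; rewrite -mul_mx_row mulmx_ker row_mx0.
  apply/andP; split; apply/sub_kermxP => //.
  by rewrite mul_mx_row mulmx_ker (sub_kermxP sAb) row_mx0.
have rkN : \rank N = \rank A.
  have := eqmx_rank kerN; rewrite !mxrank_ker.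
  by have := rank_leq_row N; have := rank_leq_row A; lia.
have sAN : (A^T <= N^T)%MS by rewrite tr_row_mx -addsmxE addsmxSl.
have sNA : (N^T <= A^T)%MS by rewrite -(mxrank_leqif_sup sAN).2 !mxrank_tr rkN.
by apply: submx_trans sNA; rewrite tr_row_mx -addsmxE addsmxSr.
Qed.

Lemma kermx_cap_sub_span (K : fieldType) l (a0 a1 b : 'cV[K]_l) :
  (kermx a0 :&: kermx a1 <= kermx b)%MS -> exists c d : K, b = c *: a1 + d *: a0.
Proof.
move=> sb; pose M := row_mx a0 a1.
have sM : (kermx M <= kermx b)%MS.
  apply: submx_trans sb; have [k0 k1] : kermx M *m a0 = 0 /\ kermx M *m a1 = 0.
    by apply: eq_row_mx; rewrite -mul_mx_row mulmx_ker row_mx0.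
  by rewrite sub_capmx !sub_kermx k0 k1 eqxx.
have /submxP[D eD] := sub_kermx_trmx sM.
have -> : b = M *m D^T by rewrite -[b]trmxK eD trmx_mul trmxK.
rewrite -[D^T]vsubmxK mul_row_col [usubmx _]mx11_scalar [dsubmx _]mx11_scalar.
by rewrite !mul_mx_scalar addrC; do 2 eexists.
Qed.

Section Projection.
Variables (K : fieldType) (l : nat) (a : 'cV[K]_l) (j : 'I_l).
Hypothesis aj_neq0 : a j 0 != 0.

(* Substituting x_i := x_i - (delta_ij / a_j) lform a kills lform a and is the identity
   modulo lform a; as S is a domain, this makes lform a behave like a prime element. *)
Definition hyperplane_proj : l.-tuple {mpoly K[l]} :=
  [tuple 'X_i - ((i == j)%:R / a j 0) *: lform a | i < l].

Lemma comp_proj_lform b : lform b \mPo hyperplane_proj = lform b - (b j 0 / a j 0) *: lform a.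
Proof.
rewrite /lform raddf_sum /=.
under eq_bigr => i _ do
  rewrite comp_mpolyZ comp_mpolyXU -tnth_nth tnth_mktuple scalerBr scalerA.
rewrite sumrB -scaler_suml; congr (_ - _ *: _).
rewrite (bigD1 j) //= eqxx mul1r big1 ?addr0 // => i ij.
by rewrite (negbTE ij) mul0r mulr0.
Qed.

Lemma eqmod_comp_proj G : eqmod (lform a) G (G \mPo hyperplane_proj).
Proof.
elim/mpolyind: G => [|c m G _ _ IH]; first by rewrite comp_mpoly0; apply: eqmod_refl.
rewrite comp_mpolyD comp_mpolyZ -!mul_mpolyC; apply: eqmodD => //.
apply: eqmodM; first exact: eqmod_refl.
rewrite comp_mpolyX [X in eqmod _ X _]mpolyXE_id.
apply: (big_ind2 (eqmod (lform a))) => [|*|i _]; first exact: eqmod_refl.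
  exact: eqmodM.
apply: eqmodX; rewrite tnth_mktuple; exists (((i == j)%:R / a j 0)%:MP).
by rewrite opprB addrCA subrr addr0 [RHS]mulrC mul_mpolyC.
Qed.

Lemma comp_proj_lform_neq0 b :
  b != 0 -> ~~ (kermx b == kermx a)%MS -> lform b \mPo hyperplane_proj != 0.
Proof.
move=> b_neq0; apply: contraNN; rewrite comp_proj_lform subr_eq0 => /eqP e.
have : lform (b + (- (b j 0 / a j 0)) *: a) = 0 by rewrite lformD lformZ scaleNr e subrr.
move/lform_eq0/eqP; rewrite scaleNr subr_eq0 => {e}/eqP e.
rewrite e kermx_scale //; apply: contraNneq b_neq0 => c0.
by rewrite e c0 scale0r.
Qed.

Lemma lform_exp_dvd_cancel M Q g k : M \mPo hyperplane_proj != 0 ->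
  M * Q = lform a ^+ k * g -> exists Q', Q = lform a ^+ k * Q'.
Proof.
move=> M_neq0; have L_neq0 : lform a != 0.
  by apply: contraNneq aj_neq0 => /lform_eq0 ->; rewrite mxE.
elim: k g Q => [|k IH] g Q e; first by exists Q; rewrite expr0 mul1r.
have : (M * Q) \mPo hyperplane_proj = 0.
  by rewrite e exprS -mulrA rmorphM /= comp_proj_lform divff // scale1r subrr mul0r.
rewrite rmorphM /= => /eqP; rewrite mulf_eq0 (negbTE M_neq0) /= => /eqP Q0.
have [h eh] := eqmod_comp_proj Q; rewrite Q0 subr0 in eh.
have [|Q' hQ'] := IH g h.
  by apply: (mulfI L_neq0); rewrite mulrCA -eh e exprS mulrA.
by exists Q'; rewrite eh hQ' exprS mulrA.
Qed.

End Projection.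

Lemma prod_lform_exp_dvd (K : fieldType) l (I : finType) (a : I -> 'cV[K]_l)
    (m : I -> nat) (F : {mpoly K[l]}) (s : seq I) :
  (forall H, a H != 0) ->
  (forall H H', H != H' -> ~~ (kermx (a H) == kermx (a H'))%MS) -> uniq s ->
  (forall H, H \in s -> exists g, F = lform (a H) ^+ m H * g) ->
  exists g, F = (\prod_(H <- s) lform (a H) ^+ m H) * g.
Proof.
move=> a_neq0 a_distinct; elim: s => [|H s IH] /=.
  by exists F; rewrite big_nil mul1r.
case/andP => Hs s_uniq dvdF.
have [Q eQ] : exists Q, F = (\prod_(H' <- s) lform (a H') ^+ m H') * Q.
  by apply: IH => // H' H's; apply: dvdF; rewrite inE H's orbT.
have [g eg] := dvdF H (mem_head _ _).
have /matrix0Pn[j [k aj_neq0]] := a_neq0 H; rewrite (ord1 k) in aj_neq0.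
have prod_neq0 : (\prod_(H' <- s) lform (a H') ^+ m H') \mPo hyperplane_proj (a H) j != 0.
  rewrite rmorph_prod prodf_seq_neq0; apply/allP => H' H's /=.
  rewrite rmorphXn expf_neq0 // comp_proj_lform_neq0 // a_distinct //.
  by apply: contraNneq Hs => <-.
have [Q' eQ'] := lform_exp_dvd_cancel aj_neq0 prod_neq0 (etrans (esym eQ) eg).
by exists Q'; rewrite big_cons eQ eQ' mulrCA mulrA.
Qed.

Section Restriction.
Variables (K : fieldType) (l : nat) (I : finType) (a : I -> 'cV[K]_l) (m : I -> nat).
Variable H0 : I.
Hypothesis a_neq0 : forall H, a H != 0.
Hypothesis a_distinct : forall H H', H != H' -> ~~ (kermx (a H) == kermx (a H'))%MS.

Lemma meet_sub_span H H' : H' != H0 ->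
  (kermx (a H0) :&: kermx (a H) <= kermx (a H'))%MS ->
  exists2 c, c != 0 & exists d, a H' = c *: a H + d *: a H0.
Proof.
move=> H'_neq_H0 /kermx_cap_sub_span[c [d e]]; exists c; last by exists d.
apply: contraNneq (a_distinct H'_neq_H0) => c0.
have := a_neq0 H'; rewrite e c0 scale0r add0r => da0_neq0.
by rewrite kermx_scale //; apply: contraNneq da0_neq0 => ->; rewrite scale0r.
Qed.

Lemma lform_meet_eqmod H H' : H' != H0 ->
  (kermx (a H0) :&: kermx (a H) <= kermx (a H'))%MS ->
  exists c, eqmod (lform (a H0)) (lform (a H')) (c * lform (a H)).
Proof.
move=> H'_neq_H0 /(meet_sub_span H'_neq_H0)[c _ [d ->]]; exists c%:MP, d%:MP.
by rewrite lformD !lformZ -!mul_mpolyC addrC addKr mulrC.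
Qed.

Variables (p : nat) (delta : ('I_p -> {mpoly K[l]}) -> {mpoly K[l]}).
Hypothesis p_gt0 : (0 < p)%N.
Hypothesis delta_D0 : Dp0 a m H0 delta.

Lemma restr_factor_dvd H H' (i : 'I_p) f : val i = 0%N -> H' != H0 ->
  (kermx (a H0) :&: kermx (a H) <= kermx (a H'))%MS ->
  exists g, delta (upd f i (lform (a H))) = lform (a H') ^+ m H' * g.
Proof.
case: delta_D0 => [[delta_pder delta_dvd] delta_vanish0] i0 H'_neq_H0.
move=> /(meet_sub_span H'_neq_H0)[c c_neq0 [d e]].
have {e} -> : a H = c^-1 *: a H' + (- (d / c)) *: a H0.
  by rewrite e scalerDr !scalerA mulVf // scale1r scaleNr mulrC addrK.
have [g eg] := delta_dvd H' isT i (upd f i (lform (a H'))) i0 (upd_eq _ _ _).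
exists (c^-1%:MP * g); rewrite lformD !lformZ -!mul_mpolyC.
rewrite (pderD delta_pder) !(pderZ delta_pder) /cst eg mulrCA.
by rewrite (pder_vanish delta_pder p_gt0 delta_vanish0 (k := i)) ?upd_eq // mulr0 addr0.
Qed.

End Restriction.

Theorem lemma3p2 (K : fieldType) (l : nat) (I : finType)
    (a : I -> 'cV[K]_l) (m : I -> nat) (H0 : I)
    (p : nat) (hp : (0 < p)%N)
    (delta : ('I_p -> {mpoly K[l]}) -> {mpoly K[l]}) :
  is_multiarr a m -> Dp0 a m H0 delta -> restr_in_Dp a m H0 delta.
Proof.
case=> a_neq0 a_distinct _ D0; have [[delta_pder _] delta_vanish0] := D0.
split.
  exact: (is_pder_eqmod (a0 := lform (a H0)) delta_pder hp delta_vanish0).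
move=> H /= H_neq_H0 i f i0 fi_eqmod.
pose meet H' := (H' != H0) && (kermx (a H0) :&: kermx (a H) <= kermx (a H'))%MS.
have [Q eQ] : exists Q, delta (upd f i (lform (a H))) =
    (\prod_(H' <- index_enum I | meet H') lform (a H') ^+ m H') * Q.
  rewrite -big_filter; apply: prod_lform_exp_dvd => //.
    exact/filter_uniq/index_enum_uniq.
  move=> H'; rewrite mem_filter => /andP[/andP[H'_neq_H0 sH'] _].
  exact: (restr_factor_dvd a_neq0 a_distinct hp D0 _ i0 H'_neq_H0 sH').
have [c c_eqmod] : exists c, eqmod (lform (a H0))
    (\prod_(H' <- index_enum I | meet H') lform (a H') ^+ m H')
    (c * lform (a H) ^+ zmult a m H0 H).
  apply: eqmod_prod => H' /andP[H'_neq_H0 sH'].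
  exact: (lform_meet_eqmod a_neq0 a_distinct H'_neq_H0 sH').
have f_eqmod : eqmod (lform (a H0)) (delta f) (delta (upd f i (lform (a H)))).
  apply: (pder_eqmod delta_pder hp delta_vanish0) => j.
  by rewrite /upd; case: eqP => [->|_] //; apply: eqmod_refl.
exists (c * Q); apply: eqmod_trans f_eqmod _; rewrite eQ.
apply: eqmod_trans (eqmodM c_eqmod (eqmod_refl _ Q)) _.
by rewrite -mulrA mulrCA; apply: eqmod_refl.
Qed.
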